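(* For every graph $G=(V,E)$ with at least one edge, $av_1(G)\ge 2$. Equality holds if and only if $N(u)\cup N(v)=V$ for every edge $uv\in E$. In particular, for $n\ge 2$ the star $S_n$ is the unique $n$-vertex tree minimising $av_1$, and it is one of the $n$-vertex graphs with at least one edge minimising $av_1$.
   Context: All graphs are finite and simple. For a graph $G=(V,E)$, a set $S\subseteq V$ is a $1$-nearly independent vertex set if the subgraph induced by $S$ has exactly one edge. $\sigma_1(G)$ is the number of such sets, $S_1(G)$ the sum of their sizes, and $av_1(G)=S_1(G)/\sigma_1(G)$. $N(v)$ is the set of neighbours of $v$. $S_n$ is the star on $n$ vertices. *)

From HB Require Import structures.
From mathcomp Require Import all_boot all_order all_algebra.
Set Implicit Arguments. Unset Strict Implicit. Unset Printing Implicit Defensive.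
Import Order.TTheory GRing.Theory Num.Theory.

(* A finite simple graph is a symmetric irreflexive relation e on a finType T. *)

Section NearlyIndep.
Variables (T : finType) (e : rel T).

Definition induced_edges (S : {set T}) : {set {set T}} :=
  [set U : {set T} | (U \subset S) &&
     [exists x : T, exists y : T, (U == [set x; y]) && e x y]].

Definition nearly_indep1 (S : {set T}) : bool := #|induced_edges S| == 1%N.

Definition sigma1 : nat := #|[set S : {set T} | nearly_indep1 S]|.
Definition S1 : nat := \sum_(S : {set T} | nearly_indep1 S) #|S|.
Definition av1 : rat := (S1%:R / sigma1%:R)%R.

Definition nbhd (v : T) : {set T} := [set u | e v u].

Definition has_edge : Prop := exists u v, e u v.

Definition connected_graph : Prop := forall x y, connect e x y.
Definition acyclic : Prop :=
  ~ exists p : seq T, [&& uniq p, 2 < size p & cycle e p].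
Definition is_tree : Prop := connected_graph /\ acyclic.
End NearlyIndep.

Definition star (n : nat) : rel 'I_n :=
  fun x y => (x != y) && ((val x == 0%N) || (val y == 0%N)).

Definition isomorphic (T : finType) (e e' : rel T) : Prop :=
  exists f : T -> T, bijective f /\ forall x y, e x y = e' (f x) (f y).
Arguments star n x y : clear implicits.

From mathcomp Require Import all_boot all_algebra all_fingroup.
Import GRing.Theory Num.Theory.
Set Implicit Arguments. Unset Strict Implicit. Unset Printing Implicit Defensive.

(* A 1-nearly independent set contains its unique edge, so it has at least two
   vertices and av_1 = 2 + (sum over these sets of |S| - 2) / sigma_1 >= 2, with
   equality iff every such set is a single edge.  A vertex w outside N(u) u N(v)
   makes {u, v, w} such a set of size 3; conversely, if N(u) u N(v) = V, any
   further vertex of a set whose only edge is uv would create a second edge.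
   In an acyclic graph all of whose edges dominate, the absence of triangles and
   4-cycles forces a vertex adjacent to all others, i.e. the graph is a star. *)

Section NearlyIndependent.
Variables (T : finType) (e : rel T).
Hypotheses (esym : symmetric e) (eirr : irreflexive e).

Lemma edge_neq x y : e x y -> x != y.
Proof. by apply: contraTneq => ->; rewrite eirr. Qed.

Lemma card_edge x y : e x y -> #|[set x; y]| = 2.
Proof. by move=> exy; rewrite cards2 edge_neq. Qed.

Lemma set2_in_induced_edges (S : {set T}) x y :
  e x y -> x \in S -> y \in S -> [set x; y] \in induced_edges e S.
Proof.
move=> exy xS yS; rewrite inE subUset !sub1set xS yS /=.
by apply/existsP; exists x; apply/existsP; exists y; rewrite eqxx.
Qed.

Lemma nearly_indep1P (S : {set T}) : nearly_indep1 e S ->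
  exists x y, [/\ e x y, x \in S, y \in S &
    forall a b, a \in S -> b \in S -> e a b -> [set a; b] = [set x; y]].
Proof.
case/cards1P=> U inducedE.
have : U \in induced_edges e S by rewrite inducedE set11.
rewrite inE => /andP[/subsetP sUS /existsP[x /existsP[y /andP[/eqP Uxy exy]]]].
exists x, y; split=> [||| a b aS bS eab] //; try by apply: sUS; rewrite Uxy !inE eqxx ?orbT.
by apply/eqP; rewrite -Uxy -in_set1 -inducedE set2_in_induced_edges.
Qed.

Lemma nearly_indep1_of_unique_edge (S : {set T}) x y :
  e x y -> x \in S -> y \in S ->
  (forall a b, a \in S -> b \in S -> e a b -> [set a; b] = [set x; y]) ->
  nearly_indep1 e S.
Proof.
move=> exy xS yS uniq_edge; apply/cards1P; exists [set x; y]; apply/setP=> U.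
rewrite in_set1; apply/idP/eqP=> [|->]; last exact: set2_in_induced_edges.
rewrite inE => /andP[sUS /existsP[a /existsP[b /andP[/eqP Uab eab]]]].
rewrite Uab in sUS *; apply: uniq_edge => //; apply: (subsetP sUS).
  by rewrite set21.
by rewrite set22.
Qed.

Lemma nearly_indep1_card (S : {set T}) : nearly_indep1 e S -> 2 <= #|S|.
Proof.
case/nearly_indep1P=> x [y [exy xS yS _]].
by rewrite -(card_edge exy) subset_leq_card // subUset !sub1set xS yS.
Qed.

Lemma nearly_indep1_edge u v : e u v -> nearly_indep1 e [set u; v].
Proof.
move=> euv; apply: (nearly_indep1_of_unique_edge euv); rewrite ?set21 ?set22 //.
by move=> a b; rewrite !inE => /orP[]/eqP-> /orP[]/eqP->; rewrite ?eirr // setUC.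
Qed.

Lemma sigma1_gt0 : has_edge e -> 0 < sigma1 e.
Proof.
case=> u [v euv]; rewrite card_gt0; apply/set0Pn.
by exists [set u; v]; rewrite inE nearly_indep1_edge.
Qed.

Definition excess1 : nat := \sum_(S : {set T} | nearly_indep1 e S) (#|S| - 2).

Lemma S1_excess1 : S1 e = excess1 + 2 * sigma1 e.
Proof.
have -> : sigma1 e = \sum_(S : {set T} | nearly_indep1 e S) 1.
  by rewrite /sigma1 -sum1_card; apply: eq_bigl => S; rewrite inE.
rewrite big_distrr -big_split /=; apply: eq_bigr => S /nearly_indep1_card.
by rewrite muln1 => /subnK.
Qed.

Lemma excess1_eq0P :
  reflect (forall S, nearly_indep1 e S -> #|S| = 2) (excess1 == 0).
Proof.
rewrite sum_nat_eq0; apply: (iffP forall_inP) => [card2 S niS | card2 S niS].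
  by apply/eqP; rewrite eqn_leq -subn_eq0 card2 // nearly_indep1_card.
by rewrite card2.
Qed.

Definition dominating_edge u v := nbhd e u :|: nbhd e v = [set: T].

Lemma nearly_indep1_set3 u v w :
  e u v -> ~~ e u w -> ~~ e v w -> nearly_indep1 e [set u; v; w].
Proof.
move=> euv nuw nvw; apply: (nearly_indep1_of_unique_edge euv); rewrite ?inE ?eqxx ?orbT //.
move=> a b; rewrite !inE -!orbA => /or3P[]/eqP-> /or3P[]/eqP->;
  rewrite ?eirr ?(esym w) ?(negbTE nuw) ?(negbTE nvw) // => _; exact: setUC.
Qed.

Lemma card_set3_edge u v w :
  e u v -> ~~ e u w -> ~~ e v w -> #|[set u; v; w]| = 3.
Proof.
move=> euv nuw nvw.
have wu : w != u by apply: contraNneq nvw => ->; rewrite esym.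
have wv : w != v by apply: contraNneq nuw => ->.
by rewrite setUC cardsU1 card_edge // !inE negb_or wu wv.
Qed.

Lemma dominating_edgeP u v :
  dominating_edge u v <-> forall w, e u w || e v w.
Proof.
by split=> [/setP dom w | dom]; [move: (dom w) | apply/setP=> w]; rewrite !inE ?dom.
Qed.

Lemma nearly_indep1_card2P :
  (forall S, nearly_indep1 e S -> #|S| = 2) <->
  (forall u v, e u v -> dominating_edge u v).
Proof.
split=> [card2 u v euv | dom S].
  apply/dominating_edgeP => w; apply/negPn/negP; rewrite negb_or => /andP[nuw nvw].
  by move: (card2 _ (nearly_indep1_set3 euv nuw nvw)); rewrite card_set3_edge.
case/nearly_indep1P=> x [y [exy xS yS uniq_edge]].
suff -> : S = [set x; y] by rewrite card_edge.
apply/eqP; rewrite eqEsubset andbC subUset !sub1set xS yS /=.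
apply/subsetP=> z zS; have /orP[exz|eyz] := (dominating_edgeP x y).1 (dom _ _ exy) z.
  by rewrite -(uniq_edge _ _ xS zS exz) !inE eqxx orbT.
by rewrite -(uniq_edge _ _ yS zS eyz) !inE eqxx orbT.
Qed.

Local Open Scope ring_scope.

Lemma av1_excess1 : has_edge e -> av1 e = excess1%:R / (sigma1 e)%:R + 2.
Proof.
move=> /sigma1_gt0 sigma_gt0; rewrite /av1 S1_excess1 natrD natrM mulrDl mulfK //.
by rewrite pnatr_eq0 -lt0n.
Qed.

Lemma av1_ge2 : has_edge e -> 2 <= av1 e.
Proof. by move=> he; rewrite av1_excess1 // lerDr divr_ge0. Qed.

Lemma av1_eq2P : has_edge e ->
  av1 e = 2 <-> (forall u v, e u v -> dominating_edge u v).
Proof.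
move=> he; apply: iff_trans nearly_indep1_card2P; rewrite av1_excess1 //.
have sigma_neq0 : (sigma1 e)%:R != 0 :> rat by rewrite pnatr_eq0 -lt0n sigma1_gt0.
split=> [/eqP | /excess1_eq0P/eqP->]; last by rewrite mul0r add0r.
rewrite -subr_eq0 addrK mulf_eq0 invr_eq0 (negbTE sigma_neq0) orbF pnatr_eq0.
exact: excess1_eq0P.
Qed.
End NearlyIndependent.

Section Centred.
Variables (T : finType) (e : rel T) (c : T).

Definition centred_at := forall x y, e x y = (x != y) && ((x == c) || (y == c)).

Hypothesis centred : centred_at.

Lemma centred_sym : symmetric e.
Proof. by move=> x y; rewrite !centred eq_sym orbC. Qed.

Lemma centred_irr : irreflexive e.
Proof. by move=> x; rewrite centred eqxx. Qed.

Lemma centred_dominating u v : e u v -> dominating_edge e u v.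
Proof.
rewrite centred => /andP[uv uvc]; apply/dominating_edgeP => w; rewrite !centred.
have [->|wc] := eqVneq w c; rewrite ?eqxx ?orbT ?andbT ?orbF.
  by apply: contraTT uv; rewrite negb_or !negbK => /andP[/eqP-> /eqP->].
by case/orP: uvc => /eqP->; rewrite eqxx (eq_sym c) wc ?orbT.
Qed.

Lemma centred_path_mid a b d : e a b -> e b d -> a != d -> b = c.
Proof.
rewrite !centred => /andP[_ /orP[/eqP ac|/eqP //]] /andP[_ /orP[/eqP //|/eqP dc]].
by rewrite ac dc eqxx.
Qed.

Lemma centred_acyclic : acyclic e.
Proof.
case=> p /and3P[]; case: p => [|a [|b [|d [|x q]]]] //=; rewrite !inE.
  move=> /and3P[/norP[ab ad] bd _] _ /and4P[eab ebd eda _].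
  have ba : b != a by rewrite eq_sym.
  by move: bd; rewrite (centred_path_mid eab ebd ad) (centred_path_mid ebd eda ba) eqxx.
move=> /and3P[/norP[_ /norP[ad _]] /norP[bd /norP[bx _]] _] _ /and4P[eab ebd edx _].
by move: bd; rewrite (centred_path_mid eab ebd ad) (centred_path_mid ebd edx bx) eqxx.
Qed.

Lemma centred_connected : connected_graph e.
Proof.
have edge_c z : z != c -> e z c && e c z.
  by rewrite !centred eqxx !orbT (eq_sym c) !andbT andbb.
move=> x y; apply: (@connect_trans _ _ c).
  by have [->|/edge_c/andP[xc _]] := eqVneq x c; [exact: connect0 | exact: connect1].
by have [->|/edge_c/andP[_ cy]] := eqVneq y c; [exact: connect0 | exact: connect1].
Qed.
End Centred.

Lemma centred_isomorphic (T : finType) (e e' : rel T) c c' :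
  centred_at e c -> centred_at e' c' -> isomorphic e e'.
Proof.
move=> ce ce'; exists (tperm c c'); split; first exact: (injF_bij perm_inj).
have tperm_eq x : (tperm c c' x == c') = (x == c).
  by rewrite -[X in _ == X](tpermL c c') (inj_eq perm_inj).
by move=> x y; rewrite ce ce' !tperm_eq (inj_eq perm_inj).
Qed.

Section Acyclic.
Variables (T : finType) (e : rel T).
Hypotheses (esym : symmetric e) (eirr : irreflexive e) (acyc : acyclic e).

Lemma acyclic_no_triangle a b c : e a b -> e b c -> e c a -> False.
Proof.
move=> eab ebc eca; apply: acyc; exists [:: a; b; c].
rewrite /= !inE negb_or eab ebc eca !(edge_neq eirr) //.
by rewrite esym.
Qed.

Lemma acyclic_no_square a b c d :
  e a b -> e b c -> e c d -> e d a -> a != c -> b != d -> False.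
Proof.
move=> eab ebc ecd eda ac bd; apply: acyc; exists [:: a; b; c; d].
rewrite /= !inE !negb_or eab ebc ecd eda ac bd !(edge_neq eirr) //.
by rewrite esym.
Qed.

Lemma acyclic_dominating_centred u v : e u v ->
  (forall x y, e x y -> dominating_edge e x y) -> exists c, centred_at e c.
Proof.
move=> euv dom.
have dom_or x y z : e x y -> e x z || e y z by move/dom/dominating_edgeP.
(* Either u is the centre, or some w is not adjacent to u, hence adjacent to v,
   and then v is the centre: a non-neighbour z of v closes the 4-cycle u z w v. *)
have [c c_adj] : exists c, forall z, z != c -> e c z.
  case: (pickP (fun w => (w != u) && ~~ e u w)) => [w /andP[wu nuw] | u_adj]; last first.
    by exists u => z zu; move: (u_adj z); rewrite /= zu => /negbFE.
  exists v => z zv; apply/negPn/negP => nvz.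
  have evw : e v w by move: (dom_or _ _ w euv); rewrite (negbTE nuw).
  have euz : e u z by move: (dom_or _ _ z euv); rewrite (negbTE nvz) orbF.
  have ezw : e z w by move: (dom_or _ _ w euz); rewrite (negbTE nuw).
  by apply: (acyclic_no_square euz ezw _ _ _ zv); rewrite 1?esym // eq_sym.
exists c => x y; apply/idP/andP => [exy | [xy /orP[]/eqP ?]]; subst.
- split; first exact: (edge_neq eirr exy).
  apply/negPn/negP; rewrite negb_or => /andP[xc yc].
  by apply: (acyclic_no_triangle (c_adj x xc) exy); rewrite esym c_adj.
- by rewrite c_adj // eq_sym.
- by rewrite esym c_adj.
Qed.
End Acyclic.

Lemma star_centred n : centred_at (star n.+1) ord0.
Proof. by []. Qed.

Lemma connected_has_edge (T : finType) (e : rel T) (x y : T) :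
  connected_graph e -> x != y -> has_edge e.
Proof.
move=> conn xy; case/connectP: (conn x y) => [[|z p] /= xp yE].
  by rewrite yE eqxx in xy.
by case/andP: xp => exz _; exists x, z.
Qed.

Local Open Scope ring_scope.

Theorem mainTheorem7 :
  (forall (T : finType) (e : rel T),
      symmetric e -> irreflexive e -> has_edge e ->
      (2 <= av1 e)%R /\
      (av1 e = 2 <->
         forall u v, e u v -> nbhd e u :|: nbhd e v = [set: T]))
  /\
  (forall n : nat, (2 <= n)%N ->
      is_tree (star n) /\
      (forall e : rel 'I_n, symmetric e -> irreflexive e -> is_tree e ->
         (av1 (star n) <= av1 e)%R /\
         (av1 e = av1 (star n) -> isomorphic e (star n))) /\
      has_edge (star n) /\
      (forall e : rel 'I_n, symmetric e -> irreflexive e -> has_edge e ->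
         (av1 (star n) <= av1 e)%R)).
Proof.
split=> [T e esym eirr he | [|[|m]] // _]; first by split; [exact: av1_ge2 | exact: av1_eq2P].
have star_c := @star_centred m.+1.
have star_av1 : av1 (star m.+2) = 2.
  apply/(av1_eq2P (centred_sym star_c) (centred_irr star_c)); first by exists ord0, ord_max.
  exact: centred_dominating.
split; first exact: conj (centred_connected star_c) (centred_acyclic star_c).
split; last by split=> [|e esym eirr he]; [exists ord0, ord_max | rewrite star_av1 av1_ge2].
move=> e esym eirr [conn acyc]; rewrite star_av1.
have he : has_edge e := connected_has_edge (x := ord0) (y := ord_max) conn isT.
split=> [|/(av1_eq2P esym eirr he) dom]; first exact: av1_ge2.
have [u [v euv]] := he.
have [c ce] := acyclic_dominating_centred esym eirr acyc euv dom.
exact: centred_isomorphic ce star_c.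
Qed.
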